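(* Under the standing assumptions below, suppose $3\sigma>2L$, $0<\gamma<\frac{3\sigma-2L}{L^2}$, and that $f+g$ is coercive, i.e. $\liminf_{\|u\|\to\infty}(f+g)(u)=\infty$. Then any sequence $\{(y^t,z^t,x^t)\}$ generated by the PR splitting iteration is bounded.
   Context: Standing assumptions: $f:\mathbb{R}^n\to\mathbb{R}$ is differentiable and strongly convex with modulus at least $\sigma>0$ (i.e. $f-\frac{\sigma}{2}\|\cdot\|^2$ is convex), and $\nabla f$ is Lipschitz continuous with modulus at most $L>0$. The function $g:\mathbb{R}^n\to(-\infty,\infty]$ is proper and lower semicontinuous, and for the $\gamma>0$ used, $\operatorname{Argmin}_u\{\gamma g(u)+\frac12\|u-w\|^2\}$ is nonempty for every $w\in\mathbb{R}^n$. PR splitting iteration: given $x^0$ and $\gamma>0$, for $t=0,1,2,\dots$: $y^{t+1}=\operatorname{argmin}_y\{f(y)+\frac{1}{2\gamma}\|y-x^t\|^2\}$; $z^{t+1}\in\operatorname{Argmin}_z\{g(z)+\frac{1}{2\gamma}\|2y^{t+1}-x^t-z\|^2\}$; $x^{t+1}=x^t+2(z^{t+1}-y^{t+1})$. *)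

From Stdlib Require Import Reals Lra.
From Stdlib Require Fin.
Open Scope R_scope.

Definition vec (n : nat) := Fin.t n -> R.

Definition vadd {n} (x y : vec n) : vec n := fun i => x i + y i.
Definition vsub {n} (x y : vec n) : vec n := fun i => x i - y i.
Definition vscal {n} (a : R) (x : vec n) : vec n := fun i => a * x i.

Fixpoint dot {n : nat} : vec n -> vec n -> R :=
  match n return vec n -> vec n -> R with
  | O => fun _ _ => 0
  | S m => fun x y => x Fin.F1 * y Fin.F1 +
                      @dot m (fun i => x (Fin.FS i)) (fun i => y (Fin.FS i))
  end.

Definition norm {n} (x : vec n) : R := sqrt (dot x x).

Definition has_gradient_at {n} (f : vec n -> R) (x d : vec n) : Prop :=
  forall eps, 0 < eps -> exists delta, 0 < delta /\
    forall h : vec n, norm h < delta ->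
      Rabs (f (vadd x h) - f x - dot d h) <= eps * norm h.

Definition convex_fun {n} (F : vec n -> R) : Prop :=
  forall (x y : vec n) (t : R), 0 <= t <= 1 ->
    F (vadd (vscal t x) (vscal (1 - t) y)) <= t * F x + (1 - t) * F y.

Definition strongly_convex {n} (f : vec n -> R) (sigma : R) : Prop :=
  convex_fun (fun u => f u - sigma / 2 * norm u ^ 2).

Definition lipschitz {n} (G : vec n -> vec n) (L : R) : Prop :=
  forall x y, norm (vsub (G x) (G y)) <= L * norm (vsub x y).

(* Extended reals (-oo, +oo]: Some r = r, None = +oo *)
Definition xreal := option R.
Definition xle (a b : xreal) : Prop :=
  match b with
  | None => True
  | Some rb => match a with Some ra => ra <= rb | None => False end
  end.
Definition xlt_r (a : R) (b : xreal) : Prop :=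
  match b with None => True | Some rb => a < rb end.
Definition xadd_r (a : xreal) (r : R) : xreal := option_map (fun s => s + r) a.
Definition xscal (c : R) (a : xreal) : xreal := option_map (fun s => c * s) a.

Definition proper_fun {n} (g : vec n -> xreal) : Prop := exists x, g x <> None.

Definition lsc {n} (g : vec n -> xreal) : Prop :=
  forall (x : vec n) (a : R), xlt_r a (g x) ->
    exists delta, 0 < delta /\
      forall y, norm (vsub y x) < delta -> xlt_r a (g y).

Definition is_argmin {n} (F : vec n -> xreal) (u : vec n) : Prop :=
  forall v, xle (F u) (F v).

Definition coercive_sum {n} (f : vec n -> R) (g : vec n -> xreal) : Prop :=
  forall M : R, exists R0 : R, forall u, R0 < norm u -> xlt_r M (xadd_r (g u) (f u)).

Definition PR_sequence {n} (f : vec n -> R) (g : vec n -> xreal) (gamma : R)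
    (y z x : nat -> vec n) : Prop :=
  forall t : nat,
    is_argmin (fun v => Some (f v + / (2 * gamma) * norm (vsub v (x t)) ^ 2)) (y (S t)) /\
    is_argmin (fun v => xadd_r (g v)
                 (/ (2 * gamma) * norm (vsub (vsub (vscal 2 (y (S t))) (x t)) v) ^ 2))
              (z (S t)) /\
    x (S t) = vadd (x t) (vscal 2 (vsub (z (S t)) (y (S t)))).

(* With [x^t = y^(t+1) + gamma grad f(y^(t+1))] (optimality of the y-step), the quantity
   [merit (y, z) = f y + g z - <grad f y, y - z> + |y - z|^2 / (2 gamma)] does not increase
   along the iteration: the z-step minimises it in z, and the y-step decreases it as soon as
   [gamma L^2 <= sigma].  When moreover [1/(2 gamma) + sigma/2 >= L], it dominates
   [(f + g)(z)], so coercivity bounds [z^t].  Strong monotonicity of [grad f] makes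
   [y |-> y + gamma grad f y] expanding and [y |-> y - gamma grad f y] contracting, so
   [|y^(t+2)|^2 <= (1 - gamma sigma / 2) |y^(t+1)|^2 + C |z^(t+1)|^2] and [y^t] is bounded,
   hence so is [x^t].  In positive dimension [sigma <= L], and then the step-size condition
   implies both requirements. *)

From Stdlib Require Import Reals Lra Lia Psatz FunctionalExtensionality.
Open Scope R_scope.

Ltac vec_ext := apply functional_extensionality; intro; unfold vadd, vsub, vscal; ring.

Lemma dot_addl {n} (x y w : vec n) : dot (vadd x y) w = dot x w + dot y w.
Proof.
  induction n as [|n IH]; simpl; [lra|].
  specialize (IH (fun i => x (Fin.FS i)) (fun i => y (Fin.FS i)) (fun i => w (Fin.FS i))).
  unfold vadd in *; rewrite IH; ring.
Qed.

Lemma dot_subl {n} (x y w : vec n) : dot (vsub x y) w = dot x w - dot y w.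
Proof.
  induction n as [|n IH]; simpl; [lra|].
  specialize (IH (fun i => x (Fin.FS i)) (fun i => y (Fin.FS i)) (fun i => w (Fin.FS i))).
  unfold vsub in *; rewrite IH; ring.
Qed.

Lemma dot_scall {n} (a : R) (x w : vec n) : dot (vscal a x) w = a * dot x w.
Proof.
  induction n as [|n IH]; simpl; [lra|].
  specialize (IH (fun i => x (Fin.FS i)) (fun i => w (Fin.FS i))).
  unfold vscal in *; rewrite IH; ring.
Qed.

Lemma dot_comm {n} (x w : vec n) : dot x w = dot w x.
Proof. induction n as [|n IH]; simpl; [lra|]. rewrite IH; ring. Qed.

Lemma dot_addr {n} (x y w : vec n) : dot w (vadd x y) = dot w x + dot w y.
Proof. rewrite !(dot_comm w); apply dot_addl. Qed.

Lemma dot_subr {n} (x y w : vec n) : dot w (vsub x y) = dot w x - dot w y.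
Proof. rewrite !(dot_comm w); apply dot_subl. Qed.

Lemma dot_scalr {n} (a : R) (x w : vec n) : dot w (vscal a x) = a * dot w x.
Proof. rewrite !(dot_comm w); apply dot_scall. Qed.

#[local] Hint Rewrite @dot_addl @dot_addr @dot_subl @dot_subr @dot_scall @dot_scalr : dot.

Lemma dot_self_ge0 {n} (x : vec n) : 0 <= dot x x.
Proof.
  induction n as [|n IH]; simpl; [lra|].
  specialize (IH (fun i => x (Fin.FS i))); nra.
Qed.

Lemma dot_self_eq0 {n} (x : vec n) : dot x x = 0 -> x = fun _ => 0.
Proof.
  intro H; apply functional_extensionality; intro i; revert x H.
  induction n as [|n IH]; intros x H; [inversion i|].
  simpl in H; pose proof (dot_self_ge0 (fun i => x (Fin.FS i))).
  apply (Fin.caseS' i (fun i => x i = 0)); [nra|].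
  intro j; apply (IH j (fun i => x (Fin.FS i))); nra.
Qed.

Lemma dot_const1_gt0 (m : nat) : 0 < dot (fun _ : Fin.t (S m) => 1) (fun _ => 1).
Proof. simpl; pose proof (dot_self_ge0 (fun _ : Fin.t m => 1)); lra. Qed.

Lemma norm_ge0 {n} (x : vec n) : 0 <= norm x.
Proof. apply sqrt_pos. Qed.

Lemma norm_sq {n} (x : vec n) : norm x ^ 2 = dot x x.
Proof. apply pow2_sqrt, dot_self_ge0. Qed.

Lemma norm_scal {n} (a : R) (x : vec n) : norm (vscal a x) = Rabs a * norm x.
Proof.
  unfold norm; rewrite dot_scall, dot_scalr, <- Rmult_assoc, sqrt_mult_alt by nra.
  rewrite <- sqrt_Rsqr_abs; reflexivity.
Qed.

Lemma norm_dim0 (x : vec 0) : norm x = 0.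
Proof. apply sqrt_0. Qed.

Lemma vsub0 {n} (x : vec n) : vsub x (fun _ => 0) = x.
Proof. vec_ext. Qed.

Lemma dot_young {n} (e : R) (u v : vec n) : 0 < e ->
  dot (vadd u v) (vadd u v) <= (1 + e) * dot u u + (1 + / e) * dot v v.
Proof.
  intro He; pose proof (dot_self_ge0 (vsub (vscal e u) v)) as H.
  autorewrite with dot in *; rewrite (dot_comm v u) in *.
  assert (2 * dot u v <= e * dot u u + / e * dot v v).
  { apply (Rmult_le_reg_l e); [lra|].
    replace (e * (e * dot u u + / e * dot v v)) with (e * (e * dot u u) + dot v v)
      by (field; lra).
    lra. }
  lra.
Qed.

Lemma Rabs_le_inv (a b : R) : Rabs a <= b -> - b <= a <= b.
Proof. unfold Rabs; destruct (Rcase_abs a); lra. Qed.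

Lemma le0_of_le_eps_mul (A c : R) : 0 <= c -> (forall eps, 0 < eps -> A <= eps * c) -> A <= 0.
Proof.
  intros Hc H; destruct (Rle_or_lt A 0) as [|HA]; [assumption|].
  assert (Heps : 0 < A / (2 * (c + 1))) by (apply Rdiv_lt_0_compat; lra).
  specialize (H _ Heps).
  replace (A / (2 * (c + 1)) * c) with (A / 2 - A / (2 * (c + 1))) in H by (field; lra).
  lra.
Qed.

Lemma exists_small_step (delta c : R) : 0 < delta -> 0 <= c ->
  exists t, 0 < t <= 1 /\ t * c < delta.
Proof.
  intros Hd Hc; assert (Hq : 0 < delta / (c + 1)) by (apply Rdiv_lt_0_compat; lra).
  exists (Rmin 1 (delta / (c + 1))); split; [split; [apply Rmin_glb_lt; lra | apply Rmin_l]|].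
  apply Rle_lt_trans with (delta / (c + 1) * c); [apply Rmult_le_compat_r; [lra | apply Rmin_r]|].
  replace (delta / (c + 1) * c) with (delta - delta / (c + 1)) by (field; lra); lra.
Qed.

Lemma gradient_eq0_of_min {n} (F : vec n -> R) (u d : vec n) :
  has_gradient_at F u d -> (forall v, F u <= F v) -> d = fun _ => 0.
Proof.
  intros Hgrad Hmin; apply dot_self_eq0.
  enough (dot d d <= 0) by (pose proof (dot_self_ge0 d); lra).
  apply (le0_of_le_eps_mul _ (norm d) (norm_ge0 d)); intros eps Heps.
  destruct (Hgrad eps Heps) as [delta [Hdelta Hsmall]].
  destruct (exists_small_step delta (norm d) Hdelta (norm_ge0 d)) as [t [Ht Htd]].
  specialize (Hsmall (vscal (- t) d)).
  rewrite norm_scal, Rabs_Ropp, Rabs_right, dot_scalr in Hsmall by lra.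
  apply Rabs_le_inv in Hsmall; [|exact Htd].
  specialize (Hmin (vadd u (vscal (- t) d))).
  apply (Rmult_le_reg_l t); [lra|]; lra.
Qed.

Lemma has_gradient_sq_dist {n} (w x : vec n) :
  has_gradient_at (fun v => norm (vsub v w) ^ 2) x (vscal 2 (vsub x w)).
Proof.
  intros eps Heps; exists eps; split; [exact Heps|]; intros h Hh.
  replace (vsub (vadd x h) w) with (vadd (vsub x w) h) by vec_ext.
  set (p := vsub x w).
  replace (norm (vadd p h) ^ 2 - norm p ^ 2 - dot (vscal 2 p) h) with (norm h ^ 2)
    by (rewrite !norm_sq; autorewrite with dot; rewrite (dot_comm h p); ring).
  rewrite Rabs_right by (apply Rle_ge, pow2_ge_0).
  pose proof (norm_ge0 h); nra.
Qed.

Lemma has_gradient_add_scal {n} (F G : vec n -> R) (c : R) (x dF dG : vec n) :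
  has_gradient_at F x dF -> has_gradient_at G x dG ->
  has_gradient_at (fun v => F v + c * G v) x (vadd dF (vscal c dG)).
Proof.
  intros HF HG eps Heps.
  set (e2 := eps / (2 * (Rabs c + 1))).
  assert (He2 : 0 < e2) by (apply Rdiv_lt_0_compat; pose proof (Rabs_pos c); lra).
  assert (Hce2 : Rabs c * e2 <= eps / 2).
  { replace (Rabs c * e2) with (eps / 2 - e2) by (unfold e2; field; pose proof (Rabs_pos c); lra).
    lra. }
  destruct (HF (eps / 2)) as [d1 [Hd1 H1]]; [lra|].
  destruct (HG e2 He2) as [d2 [Hd2 H2]].
  exists (Rmin d1 d2); split; [apply Rmin_glb_lt; lra|]; intros h Hh.
  specialize (H1 h (Rlt_le_trans _ _ _ Hh (Rmin_l _ _))).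
  specialize (H2 h (Rlt_le_trans _ _ _ Hh (Rmin_r _ _))).
  autorewrite with dot.
  replace (F (vadd x h) + c * G (vadd x h) - (F x + c * G x) - (dot dF h + c * dot dG h))
    with ((F (vadd x h) - F x - dot dF h) + c * (G (vadd x h) - G x - dot dG h)) by ring.
  eapply Rle_trans; [apply Rabs_triang|]; rewrite Rabs_mult.
  assert (Rabs c * Rabs (G (vadd x h) - G x - dot dG h) <= Rabs c * e2 * norm h).
  { rewrite Rmult_assoc; apply Rmult_le_compat_l; [apply Rabs_pos | exact H2]. }
  assert (Rabs c * e2 * norm h <= eps / 2 * norm h)
    by (apply Rmult_le_compat_r; [apply norm_ge0 | exact Hce2]).
  lra.
Qed.

Lemma convex_gradient_ineq {n} (F : vec n -> R) (a b d : vec n) :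
  convex_fun F -> has_gradient_at F b d -> F b + dot d (vsub a b) <= F a.
Proof.
  intros Hconv Hgrad; set (D := vsub a b).
  enough (dot d D - (F a - F b) <= 0) by lra.
  apply (le0_of_le_eps_mul _ (norm D) (norm_ge0 D)); intros eps Heps.
  destruct (Hgrad eps Heps) as [delta [Hdelta Hsmall]].
  destruct (exists_small_step delta (norm D) Hdelta (norm_ge0 D)) as [t [Ht Htd]].
  specialize (Hsmall (vscal t D)).
  rewrite norm_scal, Rabs_right, dot_scalr in Hsmall by lra.
  apply Rabs_le_inv in Hsmall; [|exact Htd].
  specialize (Hconv a b t (conj (Rlt_le _ _ (proj1 Ht)) (proj2 Ht))).
  replace (vadd (vscal t a) (vscal (1 - t) b)) with (vadd b (vscal t D)) in Hconv
    by (unfold D; vec_ext).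
  apply (Rmult_le_reg_l t); [lra|]; lra.
Qed.

Lemma strongly_convex_gradient_ineq {n} (f : vec n -> R) (df : vec n -> vec n) (sigma : R)
  (a b : vec n) :
  (forall x, has_gradient_at f x (df x)) -> strongly_convex f sigma ->
  f b + dot (df b) (vsub a b) + sigma / 2 * dot (vsub a b) (vsub a b) <= f a.
Proof.
  intros Hdiff Hsc.
  pose proof (has_gradient_add_scal f _ (- (sigma / 2)) b _ _ (Hdiff b)
                (has_gradient_sq_dist (fun _ => 0) b)) as Hgrad; cbv beta in Hgrad.
  replace (fun v => f v + - (sigma / 2) * norm (vsub v (fun _ => 0)) ^ 2)
    with (fun u => f u - sigma / 2 * norm u ^ 2) in Hgrad
    by (apply functional_extensionality; intro u; rewrite vsub0; ring).
  pose proof (convex_gradient_ineq _ a b _ Hsc Hgrad) as H; cbv beta in H.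
  rewrite vsub0, !norm_sq in H; autorewrite with dot in *; rewrite (dot_comm a b) in *.
  lra.
Qed.

Lemma forward_step_sq_ge {n} (gamma : R) (u G : vec n) : 0 <= gamma -> 0 <= dot u G ->
  dot u u <= dot (vadd u (vscal gamma G)) (vadd u (vscal gamma G)).
Proof.
  intros Hg HuG; autorewrite with dot; rewrite (dot_comm G u).
  pose proof (dot_self_ge0 G); nra.
Qed.

Lemma backward_step_sq_le {n} (gamma sigma L : R) (u G : vec n) :
  0 < gamma -> gamma * L ^ 2 <= sigma ->
  sigma * dot u u <= dot G u -> dot G G <= L ^ 2 * dot u u ->
  dot (vsub u (vscal gamma G)) (vsub u (vscal gamma G)) <= (1 - gamma * sigma) * dot u u.
Proof.
  intros Hg Hstep Hmono HG; autorewrite with dot; rewrite (dot_comm u G).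
  pose proof (dot_self_ge0 u).
  assert (gamma * (sigma * dot u u) <= gamma * dot G u) by (apply Rmult_le_compat_l; lra).
  assert (gamma * (gamma * dot G G) <= gamma * (gamma * L ^ 2 * dot u u))
    by (rewrite Rmult_assoc; apply Rmult_le_compat_l; [lra|]; apply Rmult_le_compat_l; lra).
  assert (gamma * (gamma * L ^ 2 * dot u u) <= gamma * (sigma * dot u u))
    by (apply Rmult_le_compat_l; [lra|]; apply Rmult_le_compat_r; lra).
  lra.
Qed.

Section SmoothStronglyConvex.

Variables (n : nat) (f : vec n -> R) (df : vec n -> vec n) (sigma L : R).
Hypotheses (Hdiff : forall x, has_gradient_at f x (df x)) (Hsc : strongly_convex f sigma)
  (Hlip : lipschitz df L) (HL : 0 < L).

Lemma gradient_strongly_monotone (a b : vec n) :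
  sigma * dot (vsub a b) (vsub a b) <= dot (vsub (df a) (df b)) (vsub a b).
Proof.
  pose proof (strongly_convex_gradient_ineq f df sigma a b Hdiff Hsc) as Hab.
  pose proof (strongly_convex_gradient_ineq f df sigma b a Hdiff Hsc) as Hba.
  autorewrite with dot in *; rewrite (dot_comm b a) in *; lra.
Qed.

Lemma gradient_lipschitz_sq (a b : vec n) :
  dot (vsub (df a) (df b)) (vsub (df a) (df b)) <= L ^ 2 * dot (vsub a b) (vsub a b).
Proof.
  rewrite <- !norm_sq; specialize (Hlip a b).
  pose proof (norm_ge0 (vsub (df a) (df b))); pose proof (norm_ge0 (vsub a b)); nra.
Qed.

Lemma gradient_inner_le (a b : vec n) :
  dot (vsub (df a) (df b)) (vsub a b) <= L * dot (vsub a b) (vsub a b).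
Proof.
  pose proof (gradient_lipschitz_sq a b) as HG.
  set (G := vsub (df a) (df b)) in *; set (D := vsub a b) in *.
  pose proof (dot_self_ge0 (vsub G (vscal L D))) as H.
  autorewrite with dot in H; rewrite (dot_comm D G) in H.
  apply (Rmult_le_reg_l (2 * L)); nra.
Qed.

Lemma sigma_le_lipschitz (v : vec n) : 0 < dot v v -> sigma <= L.
Proof.
  intro Hv; pose proof (gradient_strongly_monotone v (fun _ => 0)) as Hm.
  pose proof (gradient_inner_le v (fun _ => 0)) as Hl.
  rewrite vsub0 in Hm, Hl.
  apply (Rmult_le_reg_r (dot v v)); lra.
Qed.

Lemma gradient_sq_le (a : vec n) :
  dot (df a) (df a) <= 2 * (L ^ 2 * dot a a) + 2 * dot (df (fun _ => 0)) (df (fun _ => 0)).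
Proof.
  pose proof (gradient_lipschitz_sq a (fun _ => 0)) as HG; rewrite vsub0 in HG.
  pose proof (dot_young 1 (vsub (df a) (df (fun _ => 0))) (df (fun _ => 0)) Rlt_0_1) as H.
  replace (vadd (vsub (df a) (df (fun _ => 0))) (df (fun _ => 0))) with (df a) in H by vec_ext.
  rewrite Rinv_1 in H; lra.
Qed.

Lemma prox_f_optimality (gamma : R) (u w : vec n) : 0 < gamma ->
  is_argmin (fun v => Some (f v + / (2 * gamma) * norm (vsub v w) ^ 2)) u ->
  w = vadd u (vscal gamma (df u)).
Proof.
  intros Hg Hmin.
  pose proof (has_gradient_add_scal f _ (/ (2 * gamma)) u _ _ (Hdiff u)
                (has_gradient_sq_dist w u)) as Hgrad; cbv beta in Hgrad.
  apply gradient_eq0_of_min in Hgrad; [|exact Hmin].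
  apply functional_extensionality; intro i.
  pose proof (f_equal (fun v => v i) Hgrad) as Hi; cbv beta in Hi.
  unfold vadd, vscal, vsub in *.
  assert (E : u i + gamma * df u i - w i
              = gamma * (df u i + / (2 * gamma) * (2 * (u i - w i)))) by (field; lra).
  rewrite Hi in E; lra.
Qed.

End SmoothStronglyConvex.

(* The z-step minimises [v |-> merit f df gamma u v (g v)] up to a constant: see
   [sq_dist_reflected_eq]. *)
Definition merit {n} (f : vec n -> R) (df : vec n -> vec n) (gamma : R) (u v : vec n) (r : R) :=
  f u + r - dot (df u) (vsub u v) + / (2 * gamma) * dot (vsub u v) (vsub u v).

Lemma sq_dist_reflected_eq {n} (gamma : R) (u d v : vec n) : 0 < gamma ->
  / (2 * gamma) * norm (vsub (vsub (vscal 2 u) (vadd u (vscal gamma d))) v) ^ 2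
  = / (2 * gamma) * dot (vsub u v) (vsub u v) - dot d (vsub u v) + gamma / 2 * dot d d.
Proof.
  intro Hg; rewrite norm_sq.
  replace (vsub (vsub (vscal 2 u) (vadd u (vscal gamma d))) v)
    with (vsub (vsub u v) (vscal gamma d)) by vec_ext.
  set (p := vsub u v); autorewrite with dot; rewrite (dot_comm d p); field; lra.
Qed.

Lemma merit_decrease_z {n} (f : vec n -> R) (df : vec n -> vec n) (g : vec n -> xreal)
  (gamma : R) (u w v v' : vec n) (r r' : R) : 0 < gamma ->
  w = vadd u (vscal gamma (df u)) ->
  is_argmin (fun v => xadd_r (g v) (/ (2 * gamma) * norm (vsub (vsub (vscal 2 u) w) v) ^ 2)) v ->
  g v = Some r -> g v' = Some r' ->
  merit f df gamma u v r <= merit f df gamma u v' r'.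
Proof.
  intros Hg Hw Hmin Hv Hv'; specialize (Hmin v').
  unfold xle, xadd_r in Hmin; rewrite Hv, Hv' in Hmin; cbv [option_map] in Hmin.
  rewrite Hw, !sq_dist_reflected_eq in Hmin by lra.
  unfold merit; lra.
Qed.

Section MeritDescent.

Variables (n : nat) (f : vec n -> R) (df : vec n -> vec n) (sigma L gamma : R).
Hypotheses (Hdiff : forall x, has_gradient_at f x (df x)) (Hsc : strongly_convex f sigma)
  (Hlip : lipschitz df L) (HL : 0 < L) (Hg : 0 < gamma).

Lemma merit_lower_bound (u v : vec n) (r : R) :
  0 <= / (2 * gamma) + sigma / 2 - L -> f v + r <= merit f df gamma u v r.
Proof.
  intro Hcoef.
  pose proof (strongly_convex_gradient_ineq f df sigma u v Hdiff Hsc) as Hf.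
  pose proof (gradient_inner_le n df L Hlip HL u v) as Hl.
  unfold merit; set (D := vsub u v) in *; rewrite dot_subl in Hl.
  assert (0 <= (/ (2 * gamma) + sigma / 2 - L) * dot D D)
    by (apply Rmult_le_pos; [lra | apply dot_self_ge0]).
  lra.
Qed.

Hypothesis Hstep : gamma * L ^ 2 <= sigma.

Lemma merit_decrease_y (a b w : vec n) (r : R) :
  vscal 2 w = vadd (vadd b a) (vscal gamma (vsub (df b) (df a))) ->
  merit f df gamma b w r <= merit f df gamma a w r.
Proof.
  intro Hw.
  pose proof (strongly_convex_gradient_ineq f df sigma a b Hdiff Hsc) as Hf.
  pose proof (gradient_lipschitz_sq n df L Hlip b a) as HG.
  set (D := vsub b a) in *; set (G := vsub (df b) (df a)) in *.
  assert (Eb : vsub b w = vscal (/ 2) (vsub D (vscal gamma G))).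
  { apply functional_extensionality; intro i; pose proof (f_equal (fun v => v i) Hw) as Hi.
    unfold D, G, vadd, vsub, vscal in *; lra. }
  assert (Ea : vsub a w = vscal (- / 2) (vadd D (vscal gamma G))).
  { apply functional_extensionality; intro i; pose proof (f_equal (fun v => v i) Hw) as Hi.
    unfold D, G, vadd, vsub, vscal in *; lra. }
  assert (Edf : df b = vadd (df a) G) by (unfold G; vec_ext).
  assert (Equad : / (2 * gamma) * dot (vsub b w) (vsub b w)
                  - / (2 * gamma) * dot (vsub a w) (vsub a w) = - dot G D / 2).
  { rewrite Eb, Ea; autorewrite with dot; rewrite (dot_comm G D); field; lra. }
  assert (Elin : dot (df b) (vsub b w) - dot (df a) (vsub a w)
                 = dot (df a) D + dot G D / 2 - gamma / 2 * dot G G).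
  { rewrite Eb, Ea, Edf; autorewrite with dot; rewrite (dot_comm G D); field. }
  replace (vsub a b) with (vscal (-1) D) in Hf by (unfold D; vec_ext).
  rewrite Edf in Hf; autorewrite with dot in Hf.
  (* The merit changes by at most [(gamma |G|^2 - sigma |D|^2) / 2]. *)
  assert (gamma * dot G G <= gamma * (L ^ 2 * dot D D)) by (apply Rmult_le_compat_l; lra).
  assert (gamma * L ^ 2 * dot D D <= sigma * dot D D)
    by (apply Rmult_le_compat_r; [apply dot_self_ge0 | lra]).
  unfold merit; lra.
Qed.

Lemma y_sq_recurrence (a b w : vec n) :
  vscal 2 w = vadd (vadd b a) (vscal gamma (vsub (df b) (df a))) ->
  dot b b <= (1 - gamma * sigma / 2) * dot a a + (1 + 2 / (gamma * sigma)) * (4 * dot w w).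
Proof.
  intro Hw.
  pose proof (gradient_strongly_monotone n f df sigma Hdiff Hsc b (fun _ => 0)) as Mb.
  pose proof (gradient_strongly_monotone n f df sigma Hdiff Hsc a (fun _ => 0)) as Ma.
  pose proof (gradient_lipschitz_sq n df L Hlip a (fun _ => 0)) as La.
  rewrite !vsub0 in Mb, Ma, La.
  set (Gb := vsub (df b) (df (fun _ => 0))) in *.
  set (Ga := vsub (df a) (df (fun _ => 0))) in *.
  set (T := vsub a (vscal gamma Ga)).
  assert (0 < gamma * L ^ 2) by (apply Rmult_lt_0_compat; [lra | apply pow_lt; lra]).
  assert (Hs : 0 < sigma) by lra.
  assert (Hk : 0 < gamma * sigma) by (apply Rmult_lt_0_compat; lra).
  assert (Eq : vadd b (vscal gamma Gb) = vadd (vscal (-1) T) (vscal 2 w)).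
  { apply functional_extensionality; intro i; pose proof (f_equal (fun v => v i) Hw) as Hi.
    unfold T, Ga, Gb, vadd, vsub, vscal in *; lra. }
  pose proof (dot_self_ge0 a); pose proof (dot_self_ge0 b).
  rewrite (dot_comm Gb b) in Mb.
  assert (0 <= dot b Gb) by (apply (Rle_trans _ (sigma * dot b b)); [apply Rmult_le_pos |]; lra).
  pose proof (forward_step_sq_ge gamma b Gb ltac:(lra) ltac:(lra)) as Hfwd; rewrite Eq in Hfwd.
  pose proof (backward_step_sq_le gamma sigma L a Ga Hg Hstep Ma La) as Hbwd; fold T in Hbwd.
  pose proof (dot_young (gamma * sigma / 2) (vscal (-1) T) (vscal 2 w) ltac:(lra)) as Hy.
  rewrite !dot_scall, !dot_scalr in Hy.
  replace (/ (gamma * sigma / 2)) with (2 / (gamma * sigma)) in Hy by (field; lra).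
  assert (0 < 2 / (gamma * sigma)) by (apply Rdiv_lt_0_compat; lra).
  assert ((1 + gamma * sigma / 2) * dot T T
          <= (1 + gamma * sigma / 2) * ((1 - gamma * sigma) * dot a a))
    by (apply Rmult_le_compat_l; lra).
  assert (0 <= gamma * sigma * (gamma * sigma) * dot a a) by (apply Rmult_le_pos; nra).
  lra.
Qed.

End MeritDescent.

Lemma affine_contraction_bounded (u : nat -> R) (q K : R) : 0 <= q < 1 -> 0 <= K ->
  (forall t, u (S t) <= q * u t + K) -> forall t, u t <= Rmax (u 0%nat) (K / (1 - q)).
Proof.
  intros Hq HK Hrec t; set (B := Rmax (u 0%nat) (K / (1 - q))).
  assert (HB : K <= (1 - q) * B).
  { replace K with ((1 - q) * (K / (1 - q))) at 1 by (field; lra).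
    apply Rmult_le_compat_l; [lra | apply Rmax_r]. }
  induction t as [|t IH]; [apply Rmax_l|].
  specialize (Hrec t); assert (q * u t <= q * B) by (apply Rmult_le_compat_l; lra); lra.
Qed.

Lemma step_size_conditions (sigma L gamma : R) : 0 < sigma <= L -> 0 < gamma ->
  gamma < (3 * sigma - 2 * L) / L ^ 2 ->
  gamma * L ^ 2 <= sigma /\ 0 <= / (2 * gamma) + sigma / 2 - L.
Proof.
  intros Hs Hg Hgam.
  apply (Rmult_lt_compat_r (L ^ 2)) in Hgam; [|apply pow_lt; lra].
  replace ((3 * sigma - 2 * L) / L ^ 2 * L ^ 2) with (3 * sigma - 2 * L) in Hgam
    by (field; lra).
  split; [lra|].
  (* [L^2 - (3 sigma - 2 L) (2 L - sigma) = (5 L - 3 sigma) (L - sigma) >= 0] *)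
  assert (gamma * (2 * L - sigma) <= 1) by nra.
  replace (/ (2 * gamma) + sigma / 2 - L) with ((1 - gamma * (2 * L - sigma)) / (2 * gamma))
    by (field; lra).
  apply Rmult_le_pos; [lra | left; apply Rinv_0_lt_compat; lra].
Qed.

(* Junk value [0] at [+oo]; only used at points where [g] is finite ([PR_g_finite]). *)
Definition xval (a : xreal) : R := match a with Some r => r | None => 0 end.

Section Iteration.

Variables (n : nat) (f : vec n -> R) (df : vec n -> vec n) (g : vec n -> xreal)
  (sigma L gamma : R) (y z x : nat -> vec n).
Hypotheses (Hdiff : forall x, has_gradient_at f x (df x)) (Hsc : strongly_convex f sigma)
  (Hlip : lipschitz df L) (HL : 0 < L) (Hg : 0 < gamma)
  (Hseq : PR_sequence f g gamma y z x).

Lemma PR_x_eq (t : nat) : x t = vadd (y (S t)) (vscal gamma (df (y (S t)))).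
Proof. destruct (Hseq t) as [Hy _]; exact (prox_f_optimality n f df Hdiff gamma _ _ Hg Hy). Qed.

Lemma PR_z_eq (t : nat) :
  vscal 2 (z (S t))
  = vadd (vadd (y (S (S t))) (y (S t))) (vscal gamma (vsub (df (y (S (S t)))) (df (y (S t))))).
Proof.
  destruct (Hseq t) as [_ [_ Hx]]; rewrite (PR_x_eq (S t)), (PR_x_eq t) in Hx.
  apply functional_extensionality; intro i; apply (f_equal (fun v => v i)) in Hx.
  unfold vadd, vsub, vscal in *; lra.
Qed.

Lemma PR_g_finite (t : nat) : proper_fun g -> g (z (S t)) = Some (xval (g (z (S t)))).
Proof.
  intros [v Hv]; destruct (Hseq t) as [_ [Hz _]]; specialize (Hz v); cbv beta in Hz.
  destruct (g (z (S t))) as [r|]; [reflexivity|].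
  destruct (g v) as [r|]; [exact (False_ind _ Hz) | congruence].
Qed.

Let merit_seq (t : nat) : R := merit f df gamma (y (S t)) (z (S t)) (xval (g (z (S t)))).

Hypotheses (Hproper : proper_fun g) (Hstep : gamma * L ^ 2 <= sigma).

Lemma merit_seq_le0 (t : nat) : merit_seq t <= merit_seq 0.
Proof.
  induction t as [|t IH]; [lra|]; apply (Rle_trans _ (merit_seq t)); [|exact IH].
  destruct (Hseq (S t)) as [_ [Hz _]].
  pose proof (merit_decrease_z f df g gamma _ _ _ _ _ _ Hg (PR_x_eq (S t)) Hz
                (PR_g_finite (S t) Hproper) (PR_g_finite t Hproper)).
  pose proof (merit_decrease_y n f df sigma L gamma Hdiff Hsc Hlip Hg Hstep
                (y (S t)) (y (S (S t))) (z (S t)) (xval (g (z (S t)))) (PR_z_eq t)).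
  unfold merit_seq; lra.
Qed.

Lemma PR_z_bounded : coercive_sum f g -> 0 <= / (2 * gamma) + sigma / 2 - L ->
  exists B, forall t, dot (z (S t)) (z (S t)) <= B.
Proof.
  intros Hcoer Hcoef; destruct (Hcoer (merit_seq 0)) as [R0 HR0].
  exists (R0 ^ 2); intro t; rewrite <- norm_sq.
  destruct (Rle_or_lt (norm (z (S t))) R0) as [Hle|Hgt].
  - apply pow_incr; split; [apply norm_ge0 | exact Hle].
  - exfalso; specialize (HR0 _ Hgt); rewrite (PR_g_finite t Hproper) in HR0; simpl in HR0.
    pose proof (merit_lower_bound n f df sigma L gamma Hdiff Hsc Hlip HL
                  (y (S t)) (z (S t)) (xval (g (z (S t)))) Hcoef).
    pose proof (merit_seq_le0 t); unfold merit_seq in *; lra.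
Qed.

Lemma PR_y_bounded : sigma <= L -> (exists B, forall t, dot (z (S t)) (z (S t)) <= B) ->
  exists B, forall t, dot (y (S t)) (y (S t)) <= B.
Proof.
  intros HsL [Bz HBz].
  assert (0 < gamma * L ^ 2) by (apply Rmult_lt_0_compat; [lra | apply pow_lt; lra]).
  assert (Hs : 0 < sigma) by lra.
  assert (gamma * L <= 1) by (apply (Rmult_le_reg_r L); nra).
  assert (Hk : 0 < gamma * sigma <= 1).
  { split; [apply Rmult_lt_0_compat; lra|].
    apply (Rle_trans _ (gamma * L)); [apply Rmult_le_compat_l|]; lra. }
  assert (0 <= Bz) by (apply (Rle_trans _ _ _ (dot_self_ge0 _) (HBz 0%nat))).
  assert (0 < 2 / (gamma * sigma)) by (apply Rdiv_lt_0_compat; lra).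
  set (K := (1 + 2 / (gamma * sigma)) * (4 * Bz)).
  assert (HK : 0 <= K) by (apply Rmult_le_pos; lra).
  eexists; apply (affine_contraction_bounded (fun t => dot (y (S t)) (y (S t)))
                    (1 - gamma * sigma / 2) K); [lra | exact HK |]; intro t.
  pose proof (y_sq_recurrence n f df sigma L gamma Hdiff Hsc Hlip HL Hg Hstep
                (y (S t)) (y (S (S t))) (z (S t)) (PR_z_eq t)).
  assert ((1 + 2 / (gamma * sigma)) * (4 * dot (z (S t)) (z (S t))) <= K)
    by (apply Rmult_le_compat_l; [|specialize (HBz t)]; lra).
  lra.
Qed.

Lemma PR_x_bounded : (exists B, forall t, dot (y (S t)) (y (S t)) <= B) ->
  exists B, forall t, dot (x t) (x t) <= B.
Proof.
  intros [By HBy]; set (d0 := df (fun _ => 0)).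
  exists (2 * By + 2 * gamma ^ 2 * (2 * (L ^ 2 * By) + 2 * dot d0 d0)); intro t.
  rewrite PR_x_eq; set (u := y (S t)).
  pose proof (dot_young 1 u (vscal gamma (df u)) Rlt_0_1) as H.
  rewrite Rinv_1, !dot_scall, !dot_scalr in H.
  pose proof (gradient_sq_le n df L Hlip u) as Hgrad; fold d0 in Hgrad.
  assert (dot u u <= By) by apply HBy.
  assert (L ^ 2 * dot u u <= L ^ 2 * By) by (apply Rmult_le_compat_l; [nra | assumption]).
  assert (gamma * (gamma * dot (df u) (df u))
          <= gamma ^ 2 * (2 * (L ^ 2 * By) + 2 * dot d0 d0))
    by (rewrite <- Rmult_assoc; replace (gamma * gamma) with (gamma ^ 2) by ring;
        apply Rmult_le_compat_l; [nra | lra]).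
  lra.
Qed.

Lemma PR_bounded : sigma <= L -> coercive_sum f g -> 0 <= / (2 * gamma) + sigma / 2 - L ->
  exists M, forall t, norm (x t) <= M /\ ((1 <= t)%nat -> norm (y t) <= M /\ norm (z t) <= M).
Proof.
  intros HsL Hcoer Hcoef.
  destruct (PR_z_bounded Hcoer Hcoef) as [Bz HBz].
  destruct (PR_y_bounded HsL (ex_intro _ Bz HBz)) as [By HBy].
  destruct (PR_x_bounded (ex_intro _ By HBy)) as [Bx HBx].
  exists (sqrt (Rmax Bx (Rmax By Bz))); intro t.
  split; [|intro Ht; destruct t as [|t]; [lia|]; split]; apply sqrt_le_1_alt.
  - apply (Rle_trans _ Bx); [apply HBx | apply Rmax_l].
  - apply (Rle_trans _ By); [apply HBy | eapply Rle_trans; [apply Rmax_l | apply Rmax_r]].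
  - apply (Rle_trans _ Bz); [apply HBz | eapply Rle_trans; [apply Rmax_r | apply Rmax_r]].
Qed.

End Iteration.

Theorem theorem2 (n : nat) (f : vec n -> R) (df : vec n -> vec n)
  (g : vec n -> xreal) (sigma L gamma : R)
  (Hsigma : 0 < sigma) (HL : 0 < L)
  (Hdiff : forall x, has_gradient_at f x (df x))
  (Hsc : strongly_convex f sigma)
  (Hlip : lipschitz df L)
  (Hproper : proper_fun g) (Hlsc : lsc g)
  (Hgam : 0 < gamma)
  (Hprox : forall w : vec n, exists u,
      is_argmin (fun v => xadd_r (xscal gamma (g v)) (/ 2 * norm (vsub v w) ^ 2)) u)
  (H3 : 3 * sigma > 2 * L)
  (Hgam2 : gamma < (3 * sigma - 2 * L) / L ^ 2)
  (Hcoer : coercive_sum f g)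
  (y z x : nat -> vec n)
  (Hseq : PR_sequence f g gamma y z x) :
  exists M : R, forall t : nat,
    norm (x t) <= M /\ ((1 <= t)%nat -> norm (y t) <= M /\ norm (z t) <= M).
Proof.
  (* [Hlsc] and [Hprox] only make the iteration well defined, and [H3] follows from [Hgam2]. *)
  destruct n as [|m].
  { exists 0; intro t; rewrite !norm_dim0; lra. }
  assert (HsL : sigma <= L)
    by exact (sigma_le_lipschitz _ f df sigma L Hdiff Hsc Hlip HL _ (dot_const1_gt0 m)).
  destruct (step_size_conditions sigma L gamma (conj Hsigma HsL) Hgam Hgam2) as [Hstep Hcoef].
  exact (PR_bounded _ f df g sigma L gamma y z x Hdiff Hsc Hlip HL Hgam Hseq Hproper Hstep
           HsL Hcoer Hcoef).
Qed.
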